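(* Let $K$ be a field (of any characteristic), let $1\le n\le d$, let $X=\{x_1,\dots,x_n\}$, and let $A\subset K$ be a set with $|A|=d$ (distinct elements). Let $f=\prod_{a\in A}(x-a)=x^d+f_{d-1}x^{d-1}+\cdots+f_0\in K[x]$ and let $G=\{g_1(x_1),g_2(x_1,x_2),\dots,g_n(x_1,\dots,x_n)\}$ where $g_i=\sum_{k=i-1}^{d}f_k\,h^{(i)}_{k-i+1}$ (with $f_d=1$). Let $V_n(A)=\{(a_1,\dots,a_n)\in A^n: a_i\ne a_j \text{ for } i\ne j\}$ and let $I\subset K[X]$ be the ideal of polynomials vanishing on $V_n(A)$. Then: (1) $G$ is a Gröbner basis of $I$ with respect to the lexicographic order $\prec$ on $K[X]$ with $x_1\prec x_2\prec\cdots\prec x_n$, and the normal set of $K[X]/I$ with respect to $\prec$ is $B=\{x_1^{k_1}\cdots x_n^{k_n}: 0\le k_1\le d-1,\ \dots,\ 0\le k_n\le d-n\}$ (i.e. $0\le k_i\le d-i$), which gives a basis of $K[X]/I$. (2) For every symmetric polynomial $h\in K[X]$, $r_A(h)=r_G(h)$, where $r_G(h)$ denotes the normal form of $h$ modulo $G$ with respect to $\prec$ and $r_A(h)$ is the symmetric Lagrange interpolant of $h$ with respect to $A$.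
   Context: $h^{(i)}_j=\sum_{k_1+\cdots+k_i=j}x_1^{k_1}\cdots x_i^{k_i}$ is the complete homogeneous symmetric polynomial of degree $j$ in $x_1,\dots,x_i$. $S_{d-n}[X]$ denotes the space of symmetric polynomials in $K[X]$ with degree in each variable $\le d-n$. For a symmetric $h\in K[X]$, the symmetric Lagrange interpolant is $$r_A(h)=\sum_{A'\subset_n A} h(A')\,\frac{\prod_{x\in X,\,a'\in A\setminus A'}(x-a')}{\prod_{a\in A',\,a'\in A\setminus A'}(a-a')},$$ the unique element of $S_{d-n}[X]$ with $r_A(h)(A')=h(A')$ for every $n$-element subset $A'\subset A$ (here $A'\subset_n A$ means $A'$ is an $n$-element subset and evaluation at $A'$ is in any order). *)

From HB Require Import structures.
From mathcomp Require Import all_boot all_order all_algebra.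
From mathcomp Require Import mpoly.
Set Implicit Arguments. Unset Strict Implicit. Unset Printing Implicit Defensive.
Import Order.TTheory GRing.Theory.
Local Open Scope ring_scope.

(* Variables x_1,...,x_n are 'X_0,...,'X_(n-1) (0-based indices). *)

Section Defs.
Variables (K : fieldType) (n : nat).

(* Lexicographic order with x_1 < x_2 < ... < x_n: compare exponents of the
   largest variable x_n first. m <lex m' iff at the largest index where they
   differ, m has the smaller exponent. *)
Definition lexlt (m m' : 'X_{1..n}) : bool :=
  [exists i : 'I_n, (m i < m' i)%N &&
     [forall j : 'I_n, (i < j)%N ==> (m j == m' j)]].

Definition lexle (m m' : 'X_{1..n}) : bool := (m == m') || lexlt m m'.

(* leading monomial w.r.t. lex (meaningful for p != 0) *)
Definition lexlead (p : {mpoly K[n]}) : 'X_{1..n} :=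
  foldr (fun m acc => if lexle acc m then m else acc) 0%MM (msupp p).

Definition mdivides (m m' : 'X_{1..n}) : bool := [forall i, (m i <= m' i)%N].

Definition in_ideal (k : nat) (G : 'I_k -> {mpoly K[n]}) (p : {mpoly K[n]}) : Prop :=
  exists c : 'I_k -> {mpoly K[n]}, p = \sum_(i < k) c i * G i.

Definition groebner_basis (k : nat) (G : 'I_k -> {mpoly K[n]})
    (I : {mpoly K[n]} -> Prop) : Prop :=
  (forall i, I (G i)) /\
  (forall p, I p -> p != 0 -> exists i, mdivides (lexlead (G i)) (lexlead p)).

Definition in_normal_set (I : {mpoly K[n]} -> Prop) (m : 'X_{1..n}) : Prop :=
  ~ (exists p, I p /\ p != 0 /\ lexlead p = m).

Definition is_normal_form (k : nat) (G : 'I_k -> {mpoly K[n]})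
    (h r : {mpoly K[n]}) : Prop :=
  in_ideal G (h - r) /\
  (forall m, m \in msupp r -> forall i, ~~ mdivides (lexlead (G i)) m).

Definition hcomp (i j : nat) : {mpoly K[n]} :=
  \sum_(m : 'X_{1..n < j.+1} |
          (mdeg (val m) == j) && [forall k : 'I_n, (i <= k)%N ==> ((val m) k == 0%N)])
    'X_[val m].

Definition fpoly (A : seq K) : {poly K} := \prod_(a <- A) ('X - a%:P).

(* g_i (paper index i = i0 + 1), with d = size A:
   g_i = sum_{k = i-1}^{d} f_k h^{(i)}_{k-i+1} *)
Definition gpoly (A : seq K) (i0 : 'I_n) : {mpoly K[n]} :=
  \sum_(i0 <= k < (size A).+1) (fpoly A)`_k *: hcomp i0.+1 (k - i0).

Definition in_Vn (A : seq K) (a : 'I_n -> K) : Prop :=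
  (forall i, a i \in A) /\ injective a.

Definition vanishing_ideal (A : seq K) (p : {mpoly K[n]}) : Prop :=
  forall a, in_Vn A a -> p.@[a] = 0.

(* monomials of B: exponent of x_i at most d - i (0-based: k_{i0} <= d-1-i0) *)
Definition inB (d : nat) (m : 'X_{1..n}) : bool :=
  [forall i : 'I_n, (m i <= d - i.+1)%N].

(* symmetric Lagrange interpolant r_A(h); n-subsets A' of A are given by
   n-subsets S of the index set 'I_(size A); h(A') is evaluation at the
   elements of A' listed in enum order (order is irrelevant for symmetric h) *)
Definition subset_pt (A : seq K) (S : {set 'I_(size A)}) : 'I_n -> K :=
  fun i => nth (0 : K) [seq nth (0 : K) A j | j : 'I_(size A) <- enum S] i.

Definition lagrange_num (A : seq K) (S : {set 'I_(size A)}) : {mpoly K[n]} :=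
  \prod_(i < n) \prod_(j in ~: S) ('X_i - (nth 0 A j)%:MP).

Definition lagrange_den (A : seq K) (S : {set 'I_(size A)}) : K :=
  \prod_(j in S) \prod_(j' in ~: S) (nth 0 A j - nth 0 A j').

Definition rA (A : seq K) (h : {mpoly K[n]}) : {mpoly K[n]} :=
  \sum_(S : {set 'I_(size A)} | #|S| == n)
     (h.@[subset_pt S] / lagrange_den S) *: lagrange_num S.

End Defs.

From mathcomp Require Import all_boot all_algebra.
From mathcomp Require Import fingroup perm.
From mathcomp Require Import mpoly.
From mathcomp Require Import zify ring.
Import GRing.Theory.
Local Open Scope ring_scope.
Set Implicit Arguments. Unset Strict Implicit. Unset Printing Implicit Defensive.

(* The lex leading monomial of g_i is x_i^(d-i+1), and B is exactly the set of
   monomials divisible by none of these.  Each g_i vanishes on V_n(A): at distinct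
   roots a_1, ..., a_(i-1) of f, g_i is the divided difference f[a_1, ..., a_(i-1), x_i],
   which vanishes when x_i is another root.  So division by G reduces every
   polynomial modulo I to one supported on B.  Conversely, a nonzero polynomial
   vanishing on V_n(A) has its leading monomial outside B: if x_k is the last
   variable it involves and e <= d - k is its exponent in the leading monomial, the
   coefficient of x_k^e vanishes on V_(k-1)(A), since otherwise fixing x_1, ...,
   x_(k-1) at distinct points of A leaves a nonzero polynomial in x_k of degree at
   most e with the d - k + 1 remaining points of A as roots; induct on k.  Hence G
   is a Groebner basis with normal set B, a remainder supported on B is unique, and
   r_A(h), supported on B and equal to h on V_n(A) for symmetric h, is the normal
   form of h. *)

Section LexOrder.
Variable n : nat.
Implicit Types m : 'X_{1..n}.

Lemma lexltP m m' :
  reflect (exists i : 'I_n, (m i < m' i)%N /\ forall j : 'I_n, (i < j)%N -> m j = m' j)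
          (lexlt m m').
Proof.
apply: (iffP existsP) => [[i /andP [lt /forallP h]] | [i [lt h]]]; exists i.
  by split=> // j ij; move: (h j); rewrite ij => /eqP.
by rewrite lt /=; apply/forallP => j; apply/implyP => ij; rewrite h.
Qed.

Lemma lexlt_irr m : ~~ lexlt m m.
Proof. by apply/lexltP => -[i [lt _]]; rewrite ltnn in lt. Qed.

Lemma lexlt_trans m1 m2 m3 : lexlt m1 m2 -> lexlt m2 m3 -> lexlt m1 m3.
Proof.
move=> /lexltP [i [lti hi]] /lexltP [j [ltj hj]]; apply/lexltP.
case: (ltngtP i j) => ij.
- exists j; split; first by rewrite hi.
  by move=> k jk; rewrite hi ?hj //; apply: ltn_trans jk.
- exists i; split; first by rewrite -hj.
  by move=> k ik; rewrite hi ?hj //; apply: ltn_trans ik.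
- have eij : i = j by apply: val_inj.
  subst j; exists i; split; first exact: ltn_trans ltj.
  by move=> k ik; rewrite hi ?hj.
Qed.

Lemma lexlt_total m m' : m != m' -> lexlt m m' || lexlt m' m.
Proof.
move=> ne; have [i0 hi0] : exists i, m i != m' i.
  apply/existsP; apply: contraR ne; rewrite negb_exists => /forallP h.
  by apply/eqP/mnmP => i; move: (h i); rewrite negbK => /eqP.
have [i hi hmax] := @arg_maxnP _ i0 (fun i : 'I_n => m i != m' i) val hi0.
have hj : forall j : 'I_n, (i < j)%N -> m j = m' j.
  move=> j ij; apply/eqP; apply: contraTT ij => hj.
  by rewrite -leqNgt; apply: hmax.
case: (ltngtP (m i) (m' i)) => c.
- by apply/orP; left; apply/lexltP; exists i.
- by apply/orP; right; apply/lexltP; exists i; split=> // j ij; rewrite hj.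
- by rewrite c eqxx in hi.
Qed.

Lemma lexle_refl m : lexle m m.
Proof. by rewrite /lexle eqxx. Qed.

Lemma lexltW m m' : lexlt m m' -> lexle m m'.
Proof. by rewrite /lexle => ->; rewrite orbT. Qed.

Lemma lexle_trans m1 m2 m3 : lexle m1 m2 -> lexle m2 m3 -> lexle m1 m3.
Proof.
rewrite /lexle => /orP [/eqP -> //| h12] /orP [/eqP <- |h23]; first by rewrite h12 orbT.
by rewrite (lexlt_trans h12 h23) orbT.
Qed.

Lemma lexle_total m m' : lexle m m' || lexle m' m.
Proof.
rewrite /lexle; case: (eqVneq m m') => //= ne.
by case/orP: (lexlt_total ne) => ->; rewrite ?orbT.
Qed.

Lemma lexle_anti m m' : lexle m m' -> lexle m' m -> m = m'.
Proof.
rewrite /lexle => /orP [/eqP //|h1] /orP [/eqP -> //|h2].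
by move: (lexlt_trans h1 h2); rewrite (negbTE (lexlt_irr _)).
Qed.

Lemma lexle0m m : lexle 0%MM m.
Proof.
rewrite /lexle; case: (eqVneq 0%MM m) => //= ne.
case/orP: (lexlt_total ne) => // /lexltP [i [lt _]].
by rewrite mnm0E in lt.
Qed.

Lemma lexltD2l u m m' : lexlt (u + m)%MM (u + m')%MM = lexlt m m'.
Proof.
apply/lexltP/lexltP => -[i [lt h]]; exists i; split.
- by move: lt; rewrite !mnmDE ltn_add2l.
- by move=> j ij; move: (h j ij); rewrite !mnmDE => /eqP; rewrite eqn_add2l => /eqP.
- by rewrite !mnmDE ltn_add2l.
- by move=> j ij; rewrite !mnmDE h.
Qed.

Lemma lexleD2l u m m' : lexle (u + m)%MM (u + m')%MM = lexle m m'.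
Proof. by rewrite /lexle lexltD2l eqm_add2l. Qed.

Lemma mdeg_split m (i : 'I_n) : (m i + \sum_(j | j != i) m j)%N = mdeg m.
Proof. by rewrite mdegE [RHS](bigD1 i). Qed.

Lemma mnm1MnE (i : 'I_n) e (j : 'I_n) : (U_(i) *+ e)%MM j = ((i == j) * e)%N.
Proof. by rewrite mulmnE mnm1E. Qed.

Lemma mnm1Mn_le (i : 'I_n) m : (U_(i) *+ m i <= m)%MM.
Proof. by apply/mnm_lepP => j; rewrite mnm1MnE; case: eqVneq => [<-|]; rewrite ?mul1n. Qed.

End LexOrder.

Section LeadingMonomial.
Variables (K : fieldType) (n : nat).
Implicit Types (p : {mpoly K[n]}) (m : 'X_{1..n}).

Definition is_lead p m := m \in msupp p /\ forall m', m' \in msupp p -> lexle m' m.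

Lemma foldr_lexmax_spec (s : seq 'X_{1..n}) :
  let M := foldr (fun m acc => if lexle acc m then m else acc) 0%MM s in
  (s != [::] -> M \in s) /\ forall m, m \in s -> lexle m M.
Proof.
elim: s => [|x s [IH1 IH2]] //=; case: ifP => h.
  split; first by rewrite inE eqxx.
  move=> m; rewrite inE => /orP [/eqP ->|ms]; first exact: lexle_refl.
  exact: lexle_trans (IH2 _ ms) h.
set M := foldr _ _ s in IH1 IH2 h *.
have hx : lexle x M by move: (lexle_total x M); rewrite h orbF.
split=> [_|m]; last by rewrite inE => /orP [/eqP ->|/IH2].
case: s @M IH1 {IH2 hx} h => [|y s] /= IH1 h; first by rewrite lexle0m in h.
by rewrite inE IH1 ?orbT.
Qed.

Lemma lexlead_spec p : p != 0 -> is_lead p (lexlead p).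
Proof.
have [h1 h2] := foldr_lexmax_spec (msupp p).
by move=> p0; split=> //; apply: h1; rewrite msupp_eq0.
Qed.

Lemma is_lead_lexlead p m : is_lead p m -> lexlead p = m.
Proof.
move=> [mp hm]; have p0 : p != 0 by apply: contraTneq mp => ->; rewrite msupp0.
have [lp hl] := lexlead_spec p0.
by apply: lexle_anti; [apply: hm | apply: hl].
Qed.

End LeadingMonomial.

Section Support.
Variables (K : fieldType) (n : nat).
Implicit Types (p q : {mpoly K[n]}) (m : 'X_{1..n}) (P Q : 'X_{1..n} -> Prop).

Definition supp_in P p := forall m, m \in msupp p -> P m.

Lemma supp_in0 P : supp_in P 0.
Proof. by move=> m; rewrite msupp0. Qed.

Lemma supp_inD P p q : supp_in P p -> supp_in P q -> supp_in P (p + q).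
Proof. by move=> hp hq m /msuppD_le; rewrite mem_cat => /orP [/hp|/hq]. Qed.

Lemma supp_inZ P c p : supp_in P p -> supp_in P (c *: p).
Proof. by move=> hp m /msuppZ_le /hp. Qed.

Lemma supp_inX P m : P m -> supp_in P 'X_[m].
Proof. by move=> h m'; rewrite msuppX inE => /eqP ->. Qed.

Lemma sub_supp_in P Q p : (forall m, P m -> Q m) -> supp_in P p -> supp_in Q p.
Proof. by move=> h hp m /hp /h. Qed.

Lemma supp_in_sum P (I : Type) (r : seq I) (Pr : pred I) (F : I -> {mpoly K[n]}) :
  (forall i, Pr i -> supp_in P (F i)) -> supp_in P (\sum_(i <- r | Pr i) F i).
Proof.
move=> h; apply: (big_ind (supp_in P)); [exact: supp_in0| |exact: h].
by move=> x y; apply: supp_inD.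
Qed.

Definition mpoly_of_coef (b : nat) (E : 'X_{1..n} -> K) : {mpoly K[n]} :=
  \sum_(w : 'X_{1..n < b}) E w *: 'X_[w].

Lemma mcoeff_mpoly_of_coef b E : (forall m, (b <= mdeg m)%N -> E m = 0) ->
  forall m, (mpoly_of_coef b E)@_m = E m.
Proof.
move=> hE m; case: (ltnP (mdeg m) b) => h; first exact: mcoeff_mpoly.
rewrite hE // /mpoly_of_coef raddf_sum big1 // => w _ /=; rewrite mcoeffZ mcoeffX.
case: eqP => [e|]; last by rewrite mulr0.
by have := bmdeg w; rewrite e; lia.
Qed.

End Support.

Section Ideal.
Variables (K : fieldType) (n k : nat) (G : 'I_k -> {mpoly K[n]}).
Implicit Types p q : {mpoly K[n]}.

Lemma in_ideal0 : in_ideal G 0.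
Proof. by exists (fun _ => 0); rewrite big1 // => i _; rewrite mul0r. Qed.

Lemma in_idealD p q : in_ideal G p -> in_ideal G q -> in_ideal G (p + q).
Proof.
move=> [c1 ->] [c2 ->]; exists (fun i => c1 i + c2 i).
by rewrite -big_split /=; apply: eq_bigr => i _; rewrite mulrDl.
Qed.

Lemma in_idealZ c p : in_ideal G p -> in_ideal G (c *: p).
Proof.
move=> [c1 ->]; exists (fun i => c *: c1 i).
by rewrite scaler_sumr; apply: eq_bigr => i _; rewrite scalerAl.
Qed.

Lemma in_idealMl q i : in_ideal G (q * G i).
Proof.
exists (fun j => if j == i then q else 0).
by rewrite (bigD1 i) //= eqxx big1 ?addr0 // => j /negbTE ->; rewrite mul0r.
Qed.

Lemma meval_in_ideal (a : 'I_n -> K) p :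
  (forall i, (G i).@[a] = 0) -> in_ideal G p -> p.@[a] = 0.
Proof.
move=> hG [c ->]; rewrite (big_morph _ (@mevalD _ _ a) (@meval0 _ _ a)).
by rewrite big1 // => i _; rewrite mevalM hG mulr0.
Qed.

End Ideal.

Lemma sum_nat_delta (R : pzSemiRingType) (F : nat -> R) a b c :
  \sum_(a <= k < b) F k * (k == c)%:R = if (a <= c < b)%N then F c else 0.
Proof.
elim: b => [|b IH]; first by rewrite big_geq // ltn0 andbF.
case: (leqP a b) => ab; last by rewrite big_geq //; case: ifP => //; lia.
rewrite big_nat_recr //= IH; case: (eqVneq b c) => [<-|bc].
  by rewrite mulr1 ltnn andbF add0r ab leqnn.
by rewrite mulr0 addr0 ltnS [(c <= b)%N]leq_eqVlt (eq_sym c) (negbTE bc).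
Qed.

Section GpolyCoef.
Variables (K : fieldType) (n : nat) (A : seq K).
Local Notation d := (size A).
Local Notation f := (fpoly A).
Implicit Types (m w u : 'X_{1..n}).

Lemma size_fpoly : size f = d.+1.
Proof. by rewrite /fpoly size_prod_XsubC. Qed.

Lemma fpoly_coef_size : f`_d = 1.
Proof.
have /monicP := monic_prod_XsubC A xpredT (fun x => x).
by rewrite lead_coefE -/(fpoly A) size_fpoly.
Qed.

Lemma root_fpoly a : a \in A -> f.[a] = 0.
Proof. by move=> h; apply/rootP; rewrite root_prod_XsubC. Qed.

Lemma mcoeff_hcomp i j m :
  (hcomp K n i j)@_m =
  ((mdeg m == j) && [forall k : 'I_n, (i <= k)%N ==> (m k == 0%N)])%:R.
Proof.
pose c m := (mdeg m == j) && [forall k : 'I_n, (i <= k)%N ==> (m k == 0%N)].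
have -> : hcomp K n i j = mpoly_of_coef j.+1 (fun m => (c m)%:R).
  rewrite /hcomp /mpoly_of_coef big_mkcond /=; apply: eq_bigr => w _.
  by rewrite /c; case: ifP => _; rewrite ?scale1r ?scale0r.
apply: mcoeff_mpoly_of_coef => m' h; rewrite /c; case: eqP => //= e.
by rewrite e ltnn in h.
Qed.

Lemma mcoeff_gpoly (i : 'I_n) m :
  (gpoly A i)@_m =
  [forall k : 'I_n, (i < k)%N ==> (m k == 0%N)]%:R * f`_(mdeg m + i).
Proof.
rewrite /gpoly raddf_sum; set v := [forall k, _].
transitivity (\sum_(i <= k < d.+1) f`_k * (k == mdeg m + i)%:R * v%:R).
  rewrite big_nat_cond [RHS]big_nat_cond; apply: eq_bigr => k /andP [/andP [ik _] _].
  rewrite /= mcoeffZ mcoeff_hcomp -mulrA; congr (_ * _).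
  have -> : (mdeg m == k - i)%N = (k == mdeg m + i)%N by apply/eqP/eqP; lia.
  by rewrite /v -mulnb natrM.
rewrite -big_distrl /= sum_nat_delta; case: ifP => h; first by rewrite mulrC.
by rewrite nth_default ?size_fpoly ?mulr0 ?mul0r //; move: h; rewrite leq_addl /=; lia.
Qed.

Definition glead (i : 'I_n) : 'X_{1..n} := (U_(i) *+ (d - i))%MM.

Lemma mcoeff_gpoly_glead (i : 'I_n) : (i <= d)%N -> (gpoly A i)@_(glead i) = 1.
Proof.
move=> i_le_d; rewrite mcoeff_gpoly mdegMn mdeg1 mul1n subnK // fpoly_coef_size mulr1.
suff -> : [forall k : 'I_n, (i < k)%N ==> ((glead i) k == 0%N)] by [].
apply/forallP => k; apply/implyP => ik; rewrite mnm1MnE.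
by case: (eqVneq i k) => [e|//]; rewrite e ltnn in ik.
Qed.

Lemma msupp_gpoly (i : 'I_n) w : w \in msupp (gpoly A i) ->
  [/\ forall j : 'I_n, (i < j)%N -> w j = 0%N, (w i <= d - i)%N &
      (w i = d - i)%N -> w = glead i].
Proof.
rewrite mcoeff_msupp mcoeff_gpoly => nz.
have /forallP hv : [forall k : 'I_n, (i < k)%N ==> (w k == 0%N)].
  by apply: contraNT nz => /negbTE ->; rewrite mul0r.
have hj : forall j : 'I_n, (i < j)%N -> w j = 0%N.
  by move=> j ij; move: (hv j); rewrite ij => /eqP.
have hd : (mdeg w + i <= d)%N.
  by apply: contraNT nz; rewrite -ltnNge => h; rewrite nth_default ?size_fpoly ?mulr0.
have hs := mdeg_split w i.
split=> // [|e]; first lia.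
apply/mnmP => j; rewrite mnm1MnE.
case: (eqVneq i j) => [<-|ne] /=; first by rewrite mul1n e.
have /eqP : (\sum_(j | j != i) w j = 0)%N by lia.
by rewrite sum_nat_eq0 => /forallP /(_ j) /implyP; rewrite eq_sym ne => /(_ isT) /eqP.
Qed.

Lemma is_lead_mulX_gpoly (i : 'I_n) u : (i <= d)%N ->
  is_lead ('X_[u] * gpoly A i) (u + glead i)%MM.
Proof.
move=> i_le_d; rewrite mpoly_mulC; split.
  by rewrite mcoeff_msupp mcoeffMX mcoeff_gpoly_glead // oner_neq0.
move=> w'; rewrite (perm_mem (msuppMX _ _)) => /mapP [w ws ->]; rewrite lexleD2l.
have [hj hle heq] := msupp_gpoly ws.
case: (eqVneq (w i) (d - i)%N) => [/heq -> |ne]; first exact: lexle_refl.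
apply/lexltW/lexltP; exists i; split.
  by rewrite mnm1MnE eqxx mul1n ltn_neqAle ne hle.
move=> j ij; rewrite hj // mnm1MnE.
by case: (eqVneq i j) => [e|//]; rewrite e ltnn in ij.
Qed.

Lemma msupp_glead_sub_gpoly (i : 'I_n) : (i <= d)%N ->
  supp_in (fun w => (w i < d - i)%N /\ forall j : 'I_n, (i < j)%N -> w j = 0%N)
    ('X_[glead i] - gpoly A i).
Proof.
move=> i_le_d w; rewrite mcoeff_msupp mcoeffB mcoeffX.
case: (eqVneq (glead i) w) => [<-|ne]; first by rewrite mcoeff_gpoly_glead // subrr eqxx.
rewrite sub0r oppr_eq0 -mcoeff_msupp => ws.
have [hj hle heq] := msupp_gpoly ws; split => //.
by rewrite ltn_neqAle hle andbT; apply: contra_neq ne => /heq ->.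
Qed.

End GpolyCoef.

Fixpoint complete_hom (R : nzRingType) (r : nat) (a : nat -> R) (k : nat) {struct r} : R :=
  match r with
  | 0 => (k == 0)%N%:R
  | r'.+1 => let fix F k := match k with
                            | 0 => 1
                            | k'.+1 => complete_hom r' a k'.+1 + a r' * F k'
                            end in F k
  end.

Section CompleteHomogeneous.
Variable R : comNzRingType.
Implicit Types (a b c e : nat -> R).

Lemma complete_homS0 r a : complete_hom r.+1 a 0 = 1. Proof. by []. Qed.

Lemma complete_homSS r a k :
  complete_hom r.+1 a k.+1 = complete_hom r a k.+1 + a r * complete_hom r.+1 a k.
Proof. by []. Qed.

Lemma complete_hom0 a k : complete_hom 0 a k = (k == 0)%N%:R. Proof. by []. Qed.

Lemma eq_complete_hom r a b k :
  (forall j, (j < r)%N -> a j = b j) -> complete_hom r a k = complete_hom r b k.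
Proof.
elim: r k => [|r IH] k h //.
elim: k => [|k IHk] //; rewrite !complete_homSS IHk (IH k.+1) ?h //.
by move=> j jr; apply: h; apply: ltnW.
Qed.

Lemma complete_hom1 a k : complete_hom 1 a k = a 0%N ^+ k.
Proof. by elim: k => [|k IH] //; rewrite complete_homSS IH complete_hom0 add0r exprS. Qed.

(* h_{k+1}(x, y) - h_{k+1}(x, z) = (y - z) h_k(x, z, y) for x = (c_0, ..., c_(r-1)). *)
Lemma complete_hom_diff r b c e y z k :
  (forall j, (j < r)%N -> b j = c j) -> (forall j, (j <= r)%N -> e j = c j) ->
  b r = y -> c r = z -> e r.+1 = y ->
  (y - z) * complete_hom r.+2 e k = complete_hom r.+1 b k.+1 - complete_hom r.+1 c k.+1.
Proof.
move=> hbc hec hb hc he.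
have hr k' : complete_hom r b k' = complete_hom r c k' by apply: eq_complete_hom.
have hr1 k' : complete_hom r.+1 e k' = complete_hom r.+1 c k'.
  by apply: eq_complete_hom => j /hec.
elim: k => [|k IH].
  by rewrite complete_homS0 !complete_homSS !complete_homS0 hr hb hc mulr1; ring.
rewrite complete_homSS hr1 he [complete_hom r.+1 b k.+2]complete_homSS.
rewrite [complete_hom r.+1 c k.+2]complete_homSS hr hb hc mulrDr mulrCA IH; ring.
Qed.

Definition gval (f : {poly R}) (d i : nat) (e : nat -> R) : R :=
  \sum_(i <= k < d.+1) f`_k * complete_hom i.+1 e (k - i).

Lemma gval_diff f d i b c e y z : (i <= d)%N ->
  (forall j, (j < i)%N -> b j = c j) -> (forall j, (j <= i)%N -> e j = c j) ->
  b i = y -> c i = z -> e i.+1 = y ->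
  (y - z) * gval f d i.+1 e = gval f d i b - gval f d i c.
Proof.
move=> i_le_d hbc hec hb hc he.
rewrite /gval -sumrB [RHS](big_ltn (i_le_d : (i < d.+1)%N)) subnn !complete_homS0.
rewrite subrr add0r mulr_sumr; apply: eq_big_nat => k /andP [ik _].
rewrite mulrCA (complete_hom_diff (k - i.+1) hbc hec hb hc he).
have -> : (k - i.+1).+1 = (k - i)%N by lia.
by rewrite mulrBr.
Qed.

End CompleteHomogeneous.

Lemma gval_mul_prod (R : idomainType) (f : {poly R}) (A : seq R) (d i : nat) :
  size f = d.+1 -> (forall x, x \in A -> f.[x] = 0) -> (i <= d)%N ->
  forall e, (forall j, (j < i)%N -> e j \in A) ->
  (forall j j', (j < i)%N -> (j' < i)%N -> e j = e j' -> j = j') ->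
  gval f d i e * \prod_(j < i) (e i - e j) = f.[e i].
Proof.
move=> sf froot; elim: i => [|i IH] i_le_d e hA hinj.
  rewrite big_ord0 mulr1 /gval horner_coef sf big_mkord; apply: eq_bigr => k _.
  by rewrite subn0 complete_hom1.
set y := e i.+1; set z := e i.
pose b j := if j == i then y else e j.
have hb j : (j < i)%N -> b j = e j.
  by rewrite /b; case: eqP => // ->; rewrite ltnn.
have hinj' j j' : (j < i)%N -> (j' < i)%N -> e j = e j' -> j = j'.
  by move=> ji j'i; apply: hinj; apply: ltnW.
have hA' j : (j < i)%N -> e j \in A by move=> ji; apply/hA/ltnW.
have gval_e0 : gval f d i e = 0.
  have := IH (ltnW i_le_d) e hA' hinj'; rewrite froot ?hA // => /eqP.
  rewrite mulf_eq0 prodf_seq_eq0 => /orP [/eqP //|/hasP [j _ /andP [_]]].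
  rewrite subr_eq0 => /eqP /hinj -/(_ (ltnSn i) (ltnW (ltn_ord j))) eij.
  by have := ltn_ord j; rewrite -eij ltnn.
have hbi : b i = y by rewrite /b eqxx.
have gval_b : gval f d i b * \prod_(j < i) (y - e j) = f.[y].
  have := IH (ltnW i_le_d) b; rewrite hbi.
  under eq_bigr => j _ do rewrite (hb _ (ltn_ord j)).
  apply=> [j ji|j j' ji j'i]; first by rewrite hb // hA'.
  by rewrite !hb //; apply: hinj'.
rewrite big_ord_recr /= mulrA [_ * (y - z)]mulrC mulrA.
rewrite (@gval_diff _ f d i b e e y z (ltnW i_le_d) hb (fun _ _ => erefl) hbi) //.
by rewrite gval_e0 subr0.
Qed.

Section GpolyEval.
Variables (K : fieldType) (n : nat).
Implicit Types (m : 'X_{1..n}) (a : 'I_n -> K).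

Definition extn a : nat -> K := fun j => if insub j is Some i then a i else 0.

Lemma extnE a (i : 'I_n) : extn a i = a i.
Proof. by rewrite /extn valK. Qed.

Lemma extn_lt a j (h : (j < n)%N) : extn a j = a (Ordinal h).
Proof. by rewrite -[j]/(nat_of_ord (Ordinal h)) extnE. Qed.

Lemma hcomp0 k : hcomp K n 0 k = ((k == 0)%N%:R)%:MP.
Proof.
apply/mpolyP => m; rewrite mcoeff_hcomp mcoeffC.
have -> : [forall j : 'I_n, (0 <= j)%N ==> (m j == 0%N)] = (m == 0%MM).
  apply/forallP/eqP => [h|-> j]; last by rewrite mnm0E eqxx implybT.
  by apply/mnmP => j; rewrite mnm0E; move/implyP: (h j) => /(_ (leq0n _)) /eqP.
case: (eqVneq m 0%MM) => [->|ne]; last by rewrite andbF mulr0.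
by rewrite mdeg0 eq_sym andbT mulr1.
Qed.

Lemma hcompS0 r : hcomp K n r.+1 0 = 1.
Proof.
apply/mpolyP => m; rewrite mcoeff_hcomp mcoeff1 mdeg_eq0.
case: (eqVneq m 0%MM) => [->|] //=.
suff -> : [forall j : 'I_n, (r.+1 <= j)%N ==> ((0%MM : 'X_{1..n}) j == 0%N)] by [].
by apply/forallP => j; rewrite mnm0E eqxx implybT.
Qed.

Lemma hcompSS (r : 'I_n) k :
  hcomp K n r.+1 k.+1 = hcomp K n r k.+1 + 'X_r * hcomp K n r.+1 k.
Proof.
apply/mpolyP => m; rewrite mcoeffD !mcoeff_hcomp mpoly_mulC.
have [hr|hr] := posnP (m r).
  rewrite (memN_msupp_eq0 (m := m)); last first.
    rewrite (perm_mem (msuppMX _ _)); apply/mapP => -[w _ e].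
    by move: hr; rewrite e mnmDE mnm1E eqxx.
  rewrite addr0; congr ((_ && _)%:R); apply/forallP/forallP => h j; apply/implyP => hj.
    case: (eqVneq j r) => [->|ne]; first by rewrite hr.
    by apply: (implyP (h j)); rewrite ltn_neqAle hj andbT eq_sym.
  by apply: (implyP (h j)); apply: ltnW.
set m' := (m - U_(r))%MM.
have em : m = (U_(r) + m')%MM by rewrite addmC submK // lep1mP -lt0n hr.
have -> : (hcomp K n r.+1 k * 'X_r)@_m = (hcomp K n r.+1 k)@_m'.
  by rewrite {1}em mcoeffMX.
rewrite mcoeff_hcomp.
have -> : [forall j : 'I_n, (r <= j)%N ==> (m j == 0%N)] = false.
  apply/negbTE; rewrite negb_forall; apply/existsP; exists r.
  by rewrite leqnn /= -lt0n hr.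
rewrite andbF add0r {1}em mdegD mdeg1 eqSS; congr ((_ && _)%:R); apply: eq_forallb => j.
rewrite /m' mnmBE mnm1E; case: (eqVneq r j) => [<-|_]; first by rewrite ltnn.
by rewrite subn0.
Qed.

Lemma meval_hcomp a r k : (r <= n)%N -> (hcomp K n r k).@[a] = complete_hom r (extn a) k.
Proof.
elim: r k => [|r IH] k hr; first by rewrite hcomp0 mevalC.
elim: k => [|k IHk]; first by rewrite hcompS0 meval1.
rewrite (hcompSS (Ordinal hr)) mevalD mevalM mevalXU IH ?IHk 1?ltnW //.
by rewrite -(extn_lt _ hr).
Qed.

Lemma meval_gpoly (A : seq K) (i : 'I_n) a :
  (gpoly A i).@[a] = gval (fpoly A) (size A) i (extn a).
Proof.
rewrite /gpoly /gval raddf_sum; apply: eq_bigr => k _ /=.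
by rewrite mevalZ meval_hcomp.
Qed.

Lemma gpoly_vanishing (A : seq K) (i : 'I_n) : (n <= size A)%N ->
  vanishing_ideal A (gpoly A i).
Proof.
move=> hnd a [hA hinj]; rewrite meval_gpoly.
have i_le_d : (i <= size A)%N by apply/ltnW/(leq_trans (ltn_ord i) hnd).
have ltn_i j : (j < i)%N -> (j < n)%N by move/ltn_trans; apply.
have hA' j : (j < i)%N -> extn a j \in A by move=> ji; rewrite (extn_lt _ (ltn_i j ji)).
have hinj' j j' : (j < i)%N -> (j' < i)%N -> extn a j = extn a j' -> j = j'.
  move=> ji j'i; rewrite (extn_lt _ (ltn_i j ji)) (extn_lt _ (ltn_i j' j'i)).
  by move=> /hinj [].
have := gval_mul_prod (size_fpoly A) (@root_fpoly _ A) i_le_d hA' hinj'.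
rewrite extnE root_fpoly // => /eqP; rewrite mulf_eq0 prodf_seq_eq0.
case/orP => [/eqP //|/hasP [j _ /andP [_]]].
rewrite subr_eq0 (extn_lt _ (ltn_i j (ltn_ord j))) => /eqP /hinj /(congr1 val) /= eij.
by have := ltn_ord j; rewrite -eij ltnn.
Qed.

End GpolyEval.

Section Reduction.
Variables (K : fieldType) (n : nat) (A : seq K).
Hypothesis hnd : (n <= size A)%N.
Local Notation d := (size A).
Local Notation G := (gpoly (n:=n) A).
Implicit Types (m w u : 'X_{1..n}) (p : {mpoly K[n]}).

Lemma reduce_linear (P P' : 'X_{1..n} -> Prop) :
  (forall w, P' w -> exists r, supp_in P r /\ in_ideal G ('X_[w] - r)) ->
  forall p, supp_in P' p -> exists r, supp_in P r /\ in_ideal G (p - r).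
Proof.
move=> h p hp.
suff /(_ (msupp p) (fun x hx => hx)) [r [hr hi]] : forall s, {subset s <= msupp p} ->
    exists r, supp_in P r /\ in_ideal G (\sum_(w <- s) p@_w *: 'X_[w] - r).
  by exists r; rewrite -mpolyE in hi.
elim=> [|w s IH] hs.
  by exists 0; rewrite big_nil subr0; split; [exact: supp_in0 | exact: in_ideal0].
have [r1 [h1 i1]] := IH (fun x hx => hs x (mem_behead (x := x) (s := w :: s) hx)).
have [r2 [h2 i2]] := h w (hp w (hs w (mem_head _ _))).
exists (p@_w *: r2 + r1); split; first by apply: supp_inD => //; apply: supp_inZ.
rewrite big_cons opprD addrACA -scalerBr.
by apply: in_idealD => //; apply: in_idealZ.
Qed.

Definition inB_from (v : nat) m : Prop :=
  forall j : 'I_n, (v <= j)%N -> (m j <= d - j.+1)%N.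

(* Induction on the exponent of x_v, dividing by g_v, whose other monomials
   have smaller x_v-exponent and leave the variables after x_v untouched. *)
Lemma reduce_var (v : 'I_n) m : inB_from v.+1 m ->
  exists r, supp_in (inB_from v) r /\ in_ideal G ('X_[m] - r).
Proof.
have vd : (v < d)%N := leq_trans (ltn_ord v) hnd.
move: {2}(m v) (erefl (m v)) => t; elim/ltn_ind: t m => t IH m et hm.
case: (leqP (m v) (d - v.+1)) => hv.
  exists 'X_[m]; split; last by rewrite subrr; exact: in_ideal0.
  apply: supp_inX => j vj; case: (ltngtP v j) => c; first exact: hm.
    by rewrite ltnNge vj in c.
  by rewrite (_ : j = v) //; apply: val_inj.
set u := (m - glead A v)%MM.
have em : m = (u + glead A v)%MM.
  rewrite /u submK //; apply/mnm_lepP => j; rewrite mnm1MnE.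
  by case: (eqVneq v j) => [<-|_] /=; rewrite ?mul1n; lia.
have -> : 'X_[m] = 'X_[u] * G v + 'X_[u] * ('X_[glead A v] - G v).
  by rewrite mulrBr addrC subrK -mpolyXD -em.
set s := 'X_[u] * ('X_[_] - _).
have hs : supp_in (fun w => inB_from v.+1 w /\ (w v < t)%N) s.
  move=> w; rewrite /s mpoly_mulC (perm_mem (msuppMX _ _)) => /mapP [w0 w0s ->].
  have [h1 h2] := msupp_glead_sub_gpoly (ltnW vd) w0s.
  split; last by rewrite mnmDE /u mnmBE mnm1MnE eqxx mul1n -et; lia.
  move=> j vj; rewrite mnmDE h2 // addn0 /u mnmBE mnm1MnE.
  have /negbTE -> : v != j by apply: contraTneq vj => <-; rewrite ltnn.
  by rewrite mul0n subn0; apply: hm.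
have [r [hr hi]] := reduce_linear (fun w (hw : inB_from v.+1 w /\ (w v < t)%N) =>
  IH (w v) hw.2 w erefl hw.1) hs.
by exists r; split => //; rewrite -addrA; apply: in_idealD => //; apply: in_idealMl.
Qed.

Lemma reduce_vars t : (t <= n)%N -> forall m,
  exists r, supp_in (inB_from (n - t)) r /\ in_ideal G ('X_[m] - r).
Proof.
elim: t => [|t IH] tn m.
  exists 'X_[m]; split; last by rewrite subrr; exact: in_ideal0.
  by apply: supp_inX => j; rewrite subn0 leqNgt ltn_ord.
have [r' [h' i']] := IH (ltnW tn) m.
have vn : (n - t.+1 < n)%N by lia.
rewrite (_ : (n - t)%N = (Ordinal vn).+1) /= in h'; last by lia.
have [r [hr hi]] := reduce_linear (@reduce_var (Ordinal vn)) h'.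
exists r; split => //.
by rewrite -(subrKA r') addrC; apply: in_idealD.
Qed.

Lemma reduce_inB p : exists r, supp_in (inB d) r /\ in_ideal G (p - r).
Proof.
apply: (reduce_linear (P' := fun _ => True)) => // w _.
have [r [hr hi]] := reduce_vars (leqnn n) w.
by exists r; split => // m /hr; rewrite subnn => hm; apply/forallP => j; apply: hm.
Qed.

End Reduction.

Section CoefVar.
Variables (K : fieldType) (n : nat).
Implicit Types (m w : 'X_{1..n}) (p q : {mpoly K[n]}).

Definition set_var (a : 'I_n -> K) (v : 'I_n) (y : K) : 'I_n -> K :=
  fun j => if j == v then y else a j.

Definition coef_var p (v : 'I_n) (i : nat) : {mpoly K[n]} :=
  mpoly_of_coef (msize p) (fun w => if w v == 0%N then p@_(w + U_(v) *+ i)%MM else 0).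

Lemma mcoeff_coef_var p v i w :
  (coef_var p v i)@_w = if w v == 0%N then p@_(w + U_(v) *+ i)%MM else 0.
Proof.
apply: mcoeff_mpoly_of_coef => w' h; case: ifP => // _.
apply/memN_msupp_eq0/msize_mdeg_ge; rewrite mdegD; exact: leq_trans h (leq_addr _ _).
Qed.

Lemma msupp_coef_var p v i : supp_in (fun w => w v = 0%N) (coef_var p v i).
Proof.
by move=> w; rewrite mcoeff_msupp mcoeff_coef_var; case: ifP => [/eqP //|_]; rewrite eqxx.
Qed.

Lemma mcoeff_mulX_coef_var p v i w :
  ('X_[U_(v) *+ i] * coef_var p v i)@_w = if w v == i then p@_w else 0.
Proof.
rewrite mpoly_mulC; case: (leqP i (w v)) => h.
  have hle : (U_(v) *+ i <= w)%MM.
    by apply/mnm_lepP => j; rewrite mnm1MnE; case: eqVneq => [<-|]; rewrite ?mul1n.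
  rewrite -{1}(submK hle) addmC mcoeffMX mcoeff_coef_var mnmBE mnm1MnE eqxx mul1n.
  by rewrite subn_eq0 eqn_leq h andbT submK.
rewrite memN_msupp_eq0; last first.
  rewrite (perm_mem (msuppMX _ _)); apply/mapP => -[w0 _ e].
  by move: h; rewrite e mnmDE mnm1MnE eqxx mul1n; lia.
by rewrite ifN // neq_ltn h.
Qed.

Lemma coef_var_expansion p v : p = \sum_(i < msize p) 'X_[U_(v) *+ i] * coef_var p v i.
Proof.
apply/mpolyP => w; rewrite raddf_sum /=.
transitivity (\sum_(i < msize p) p@_w * ((i : nat) == w v)%:R); last first.
  by apply: eq_bigr => i _; rewrite mcoeff_mulX_coef_var eq_sym; case: eqP; rewrite ?mulr1 ?mulr0.
rewrite -(big_mkord xpredT (fun i => p@_w * (i == w v)%:R)) sum_nat_delta leq0n /=.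
case: ltnP => // h; apply/memN_msupp_eq0/msize_mdeg_ge.
by rewrite -(mdeg_split w v); apply: leq_trans h (leq_addr _ _).
Qed.

Lemma meval_set_var p v (a : 'I_n -> K) y :
  p.@[set_var a v y] = (\poly_(i < msize p) (coef_var p v i).@[a]).[y].
Proof.
rewrite horner_poly {1}(coef_var_expansion p v) raddf_sum /=; apply: eq_bigr => i _.
rewrite mevalM -mpolyXn rmorphXn /= mevalXU /set_var eqxx mulrC; congr (_ * _).
rewrite !mevalE; apply: eq_big_seq => w /msupp_coef_var wv; congr (_ * _).
by apply: eq_bigr => j _; case: (eqVneq j v) => [->|//]; rewrite wv !expr0.
Qed.

End CoefVar.

Section VanishingLead.
Variables (K : fieldType) (n : nat) (A : seq K).
Hypotheses (hA : uniq A) (hnd : (n <= size A)%N).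
Implicit Types (m w : 'X_{1..n}) (p : {mpoly K[n]}) (a : 'I_n -> K).

Definition distinct_prefix (k : nat) a : Prop :=
  (forall j : 'I_n, (j < k)%N -> a j \in A) /\
  (forall j j' : 'I_n, (j < k)%N -> (j' < k)%N -> a j = a j' -> j = j').

Definition vars_below (k : nat) m : Prop := forall j : 'I_n, (k <= j)%N -> m j = 0%N.

Lemma distinct_prefix_set_var k (kn : (k < n)%N) a y :
  distinct_prefix k a -> y \in A -> (forall j : 'I_n, (j < k)%N -> y != a j) ->
  distinct_prefix k.+1 (set_var a (Ordinal kn) y).
Proof.
move=> [haA hainj] yA yS; set v := Ordinal kn.
have lt_k (j : 'I_n) : (j < k.+1)%N -> j != v -> (j < k)%N.
  by rewrite ltnS leq_eqVlt => /orP [/eqP e /eqP []|//]; apply: val_inj.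
split=> [j jk|j j' jk j'k]; rewrite /set_var.
  by case: eqVneq => [//|/(lt_k _ jk)/haA].
case: (eqVneq j v) => [->|ne]; case: (eqVneq j' v) => [->|ne'] //.
- by move=> e; have := yS j' (lt_k _ j'k ne'); rewrite e eqxx.
- by move=> e; have := yS j (lt_k _ jk ne); rewrite e eqxx.
- by apply: hainj; apply: lt_k.
Qed.

Section TopVariable.
Variables (k : nat) (kn : (k < n)%N) (p : {mpoly K[n]}) (m : 'X_{1..n}).
Hypotheses (p_vars : supp_in (vars_below k.+1) p) (p_lead : is_lead p m).
Local Notation v := (Ordinal kn).
Local Notation e := (m v).

Lemma msupp_le_lead_var w : w \in msupp p -> (w v <= e)%N.
Proof.
move=> /p_lead.2; rewrite /lexle => /orP [/eqP -> //| /lexltP [i0 [lt hj]]].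
case: (ltngtP i0 v) => c; first by rewrite hj.
  by have := p_vars p_lead.1 c; move: lt => /[swap] ->.
have -> : v = i0 by apply: val_inj.
exact: ltnW.
Qed.

Lemma coef_var_gt_lead i : (e < i)%N -> coef_var p v i = 0.
Proof.
move=> ei; apply/mpolyP => w; rewrite mcoeff_coef_var mcoeff0; case: ifP => // /eqP wv0.
apply/memN_msupp_eq0/negP => /msupp_le_lead_var.
by rewrite mnmDE wv0 mnm1MnE eqxx mul1n add0n leqNgt ei.
Qed.

Lemma coef_var_vars_below i : supp_in (vars_below k) (coef_var p v i).
Proof.
move=> w; rewrite mcoeff_msupp mcoeff_coef_var; case: ifP => [/eqP wv0|]; last by rewrite eqxx.
rewrite -mcoeff_msupp => /p_vars hw j kj.
case: (eqVneq (nat_of_ord j) k) => [ejk|ne]; first by have -> : j = v by apply: val_inj.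
have /hw : (k < j)%N by rewrite ltn_neqAle eq_sym ne kj.
by rewrite mnmDE => /eqP; rewrite addn_eq0 => /andP [/eqP].
Qed.

Lemma is_lead_coef_var : is_lead (coef_var p v e) (m - U_(v) *+ e)%MM.
Proof.
have em : m = ((m - U_(v) *+ e) + U_(v) *+ e)%MM by rewrite submK // mnm1Mn_le.
split.
  rewrite mcoeff_msupp mcoeff_coef_var mnmBE mnm1MnE eqxx mul1n subnn eqxx -em.
  by rewrite -mcoeff_msupp; exact: p_lead.1.
move=> w; rewrite mcoeff_msupp mcoeff_coef_var; case: ifP => _; last by rewrite eqxx.
rewrite -mcoeff_msupp => /p_lead.2; set u := (U_(v) *+ e)%MM in em *.
by rewrite {1}em addmC [X in lexle _ X]addmC lexleD2l.
Qed.

(* Otherwise, specialising x_0, ..., x_(k-1) would leave a nonzero polynomial in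
   x_k of degree at most e, vanishing on the d - k points of A not yet used. *)
Lemma meval_coef_var_lead :
  (forall a, distinct_prefix k.+1 a -> p.@[a] = 0) -> inB (size A) m ->
  forall a, distinct_prefix k a -> (coef_var p v e).@[a] = 0.
Proof.
move=> p_van hB a ha; apply/eqP/negPn/negP => nz.
set P := \poly_(i < msize p) (coef_var p v i).@[a].
have eB : (e < msize p)%N.
  by apply: leq_ltn_trans (msize_mdeg_lt p_lead.1); rewrite -(mdeg_split m v) leq_addr.
have Pnz : P != 0.
  apply: contraNneq nz => P0.
  by have := congr1 (fun q : {poly K} => q`_e) P0; rewrite /= coef_poly eB coef0 => ->.
have sP : (size P <= e.+1)%N.
  apply/leq_sizeP => j ej; rewrite coef_poly; case: ifP => // _.
  by rewrite coef_var_gt_lead ?meval0.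
set S := [seq extn a j | j <- iota 0 k].
have roots : all (root P) (filter (predC (mem S)) A).
  apply/allP => y; rewrite mem_filter /= => /andP [yS yA].
  rewrite /root /P -meval_set_var; apply/eqP/p_van/distinct_prefix_set_var => // j jk.
  apply: contraNneq yS => ->; apply/mapP; exists (nat_of_ord j); last by rewrite extnE.
  by rewrite mem_iota.
have cS : (count (mem S) A <= k)%N.
  rewrite -size_filter -[k](size_iota 0) -(size_map (extn a)).
  by apply: uniq_leq_size => [|x]; [exact: filter_uniq | rewrite mem_filter => /andP []].
have hrs : (count (predC (mem S)) A <= e)%N.
  by rewrite -size_filter -ltnS (leq_trans _ sP) // max_poly_roots // filter_uniq.
have hv : (e <= size A - k.+1)%N by move/forallP: hB => /(_ v).
have : (size A <= k + (size A - k.+1))%N.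
  by rewrite -{1}(count_predC (mem S) A) leq_add // (leq_trans hrs).
by have := leq_trans kn hnd; lia.
Qed.

End TopVariable.

Lemma lead_vanishing_notin_B k : (k <= n)%N -> forall p m,
  supp_in (vars_below k) p -> (forall a, distinct_prefix k a -> p.@[a] = 0) ->
  is_lead p m -> ~~ inB (size A) m.
Proof.
elim: k => [|k IH] kn p m p_vars p_van p_lead.
  have ep : p = (p@_0%MM)%:MP.
    apply/mpolyP => w; rewrite mcoeffC.
    case: (eqVneq w 0%MM) => [->|ne]; first by rewrite mulr1.
    rewrite mulr0; apply: memN_msupp_eq0; apply: contra ne => /p_vars h.
    by apply/eqP/mnmP => j; rewrite mnm0E h.
  have p0 : p = 0.
    have : p.@[fun _ => 0] = 0 by apply: p_van; split=> [j|j j']; rewrite ltn0.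
    by rewrite {1}ep mevalC => c0; rewrite ep c0 mpolyC0.
  by move: p_lead.1; rewrite p0 msupp0.
apply/negP => hB.
have q_vars : supp_in (vars_below k) (coef_var p (Ordinal kn) (m (Ordinal kn))).
  exact: coef_var_vars_below.
have /negP := IH (ltnW kn) _ _ q_vars (meval_coef_var_lead kn p_vars p_lead p_van hB)
  (is_lead_coef_var kn p_lead).
apply; apply/forallP => j; move/forallP: hB => /(_ j); rewrite mnmBE.
exact/leq_trans/leq_subr.
Qed.

End VanishingLead.

Section Interpolation.
Variables (K : fieldType) (n : nat) (A : seq K).
Hypotheses (hA : uniq A) (hnd : (n <= size A)%N).
Local Notation d := (size A).
Implicit Types (m : 'X_{1..n}) (p q h : {mpoly K[n]}) (S : {set 'I_d}).

Lemma meval_msym (s : 'S_n) p (v : 'I_n -> K) : (msym s p).@[v] = p.@[v \o s].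
Proof.
rewrite {1}(mpolyE p) (big_morph _ (@msymD _ _ s) (@msym0 _ _ s)).
rewrite (big_morph _ (@mevalD _ _ v) (@meval0 _ _ v)) [RHS]mevalE.
apply: eq_bigr => m _; rewrite msymZ mevalZ msymX mevalX; congr (_ * _).
rewrite (reindex_inj (@perm_inj _ s)) /=; apply: eq_bigr => i _.
by rewrite mnmE permK.
Qed.

Definition exps_le (b : 'I_n -> nat) m : Prop := forall i, (m i <= b i)%N.

Lemma supp_in_exps_leM p q b1 b2 : supp_in (exps_le b1) p -> supp_in (exps_le b2) q ->
  supp_in (exps_le (fun i => b1 i + b2 i)%N) (p * q).
Proof.
move=> hp hq m /msuppM_le /allpairsP [[m1 m2] /= [h1 h2 ->]] i.
by rewrite mnmDE leq_add // ?(hp _ h1 i) ?(hq _ h2 i).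
Qed.

Lemma supp_in_exps_le_prod (I : Type) (r : seq I) (P : pred I) (F : I -> {mpoly K[n]})
  (b : I -> 'I_n -> nat) : (forall x, P x -> supp_in (exps_le (b x)) (F x)) ->
  supp_in (exps_le (fun i => \sum_(x <- r | P x) b x i)%N) (\prod_(x <- r | P x) F x).
Proof.
move=> hF; elim: r => [|x r IH].
  by rewrite big_nil -mpolyX0; apply: supp_inX => i; rewrite big_nil mnm0E.
rewrite big_cons; case hx: (P x).
  by apply: sub_supp_in (supp_in_exps_leM (hF x hx) IH) => m h i; rewrite big_cons hx.
by apply: sub_supp_in IH => m h i; rewrite big_cons hx.
Qed.

Lemma supp_in_exps_le_XsubC (i : 'I_n) (c : K) :
  supp_in (exps_le (fun l => (l == i : nat))) ('X_i - c%:MP).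
Proof.
move=> m; rewrite mcoeff_msupp mcoeffB mcoeffX mcoeffC.
case: (eqVneq U_(i)%MM m) => [<- _ l|ne]; first by rewrite mnm1E eq_sym.
case: (eqVneq m 0%MM) => [-> _ l|_]; first by rewrite mnm0E.
by rewrite mulr0 subrr eqxx.
Qed.

(* Each variable occurs in #|~: S| = d - n of the linear factors. *)
Lemma lagrange_num_inB S : #|S| = n -> supp_in (inB d) (lagrange_num n S).
Proof.
move=> cS m /(@supp_in_exps_le_prod _ (index_enum 'I_n) xpredT _
  (fun i l => \sum_(j in ~: S) (l == i : nat))%N
  (fun i _ => @supp_in_exps_le_prod _ (index_enum 'I_d) (mem (~: S)) _
     (fun j l => (l == i : nat)) (fun j _ => @supp_in_exps_le_XsubC i (nth 0 A j)))) hm.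
apply/forallP => l; have := hm l; rewrite /=.
have -> : (\sum_(i < n) \sum_(j in ~: S) (l == i : nat))%N = #|~: S|.
  under eq_bigr do rewrite sum_nat_const.
  rewrite (bigD1 l) //= eqxx muln1 big1 ?addn0 // => i ne.
  by rewrite eq_sym (negbTE ne) muln0.
by have := cardsC S; rewrite card_ord cS; have := ltn_ord l; lia.
Qed.

Lemma rA_inB h : supp_in (inB d) (rA A h).
Proof. by apply: supp_in_sum => S /eqP cS; apply: supp_inZ; apply: lagrange_num_inB. Qed.

Lemma lagrange_den_neq0 S : lagrange_den S != 0.
Proof.
apply/prodf_neq0 => j jS; apply/prodf_neq0 => j' j'S.
rewrite subr_eq0 nth_uniq //; apply: contraL j'S => /eqP /val_inj <-.
by rewrite inE jS.
Qed.

Lemma meval_lagrange_num S (a : 'I_n -> K) :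
  (lagrange_num n S).@[a] = \prod_(i < n) \prod_(j in ~: S) (a i - nth 0 A j).
Proof.
rewrite /lagrange_num (big_morph _ (@mevalM _ _ a) (@meval1 _ _ a)).
apply: eq_bigr => i _; rewrite (big_morph _ (@mevalM _ _ a) (@meval1 _ _ a)).
by apply: eq_bigr => j _; rewrite mevalB mevalXU mevalC.
Qed.

Section AtPoint.
Variable a : 'I_n -> K.
Hypothesis haV : in_Vn A a.

Let index_lt i : (index (a i) A < d)%N.
Proof. by rewrite index_mem; case: haV. Qed.

Let idx i : 'I_d := Ordinal (index_lt i).

Let nth_idx i : nth 0 A (idx i) = a i.
Proof. by rewrite /= nth_index //; case: haV. Qed.

Let idx_inj : injective idx.
Proof. by move=> i j e; apply: haV.2; rewrite -nth_idx e nth_idx. Qed.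

Definition point_set : {set 'I_d} := idx @: [set: 'I_n].

Lemma card_point_set : #|point_set| = n.
Proof. by rewrite card_imset // cardsT card_ord. Qed.

Lemma meval_lagrange_num_point_set : (lagrange_num n point_set).@[a] = lagrange_den point_set.
Proof.
rewrite meval_lagrange_num /lagrange_den big_imset /=; last by move=> x y _ _ /idx_inj.
by apply: eq_big => [i|i _]; rewrite ?inE //; apply: eq_bigr => j _; rewrite nth_idx.
Qed.

Lemma meval_lagrange_num_other S : #|S| = n -> S != point_set -> (lagrange_num n S).@[a] = 0.
Proof.
move=> cS ne; have [i hi] : exists i, idx i \notin S.
  apply/existsP; rewrite -negb_forall; apply: contra ne => /forallP hall.
  rewrite eq_sym eqEcard cS card_point_set leqnn andbT.
  by apply/subsetP => j /imsetP [i _ ->].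
rewrite meval_lagrange_num (bigD1 i) //= (bigD1 (idx i)) ?inE //=.
by rewrite nth_idx subrr !mul0r.
Qed.

Lemma subset_pt_point_set : exists s : 'S_n, subset_pt point_set =1 a \o s.
Proof.
set L := [seq nth 0 A j | j : 'I_d <- enum point_set].
have sL : size L = n by rewrite size_map -cardE card_point_set.
have uL : uniq L.
  rewrite map_inj_in_uniq ?enum_uniq // => j j' _ _ /eqP.
  by rewrite nth_uniq // => /eqP /val_inj.
have ex (i : 'I_n) : exists i', a i' == subset_pt point_set i.
  have : nth 0 L i \in L by rewrite mem_nth // sL.
  case/mapP=> j; rewrite mem_enum => /imsetP [i' _ ->] e.
  by exists i'; rewrite /subset_pt -/L e nth_idx.
pose sig i := odflt i [pick i' | a i' == subset_pt point_set i].
have hsig (i : 'I_n) : a (sig i) = subset_pt point_set i.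
  rewrite /sig; case: pickP => [i' /eqP //|none].
  by have [i' hi'] := ex i; rewrite none in hi'.
have sig_inj : injective sig.
  move=> i j e; have := hsig i; rewrite e hsig /subset_pt -/L => /eqP.
  by rewrite nth_uniq ?sL // => /eqP /val_inj.
by exists (perm sig_inj) => i /=; rewrite permE hsig.
Qed.

Lemma meval_rA h : h \is symmetric -> (rA A h).@[a] = h.@[a].
Proof.
move=> hs; rewrite /rA (big_morph _ (@mevalD _ _ a) (@meval0 _ _ a)).
rewrite (bigD1 point_set) /=; last by rewrite card_point_set.
rewrite big1 => [|S /andP [/eqP cS ne]]; last by rewrite mevalZ meval_lagrange_num_other ?mulr0.
rewrite addr0 mevalZ meval_lagrange_num_point_set mulfVK ?lagrange_den_neq0 //.
have [s hs'] := subset_pt_point_set.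
by rewrite (meval_eq _ hs') -meval_msym (issymP _ hs).
Qed.

End AtPoint.

End Interpolation.

Section Proposition.
Variables (K : fieldType) (n : nat) (A : seq K).
Hypotheses (hA : uniq A) (hnd : (n <= size A)%N).
Local Notation d := (size A).
Local Notation I := (vanishing_ideal (n:=n) A).
Local Notation G := (gpoly (n:=n) A).
Implicit Types (m : 'X_{1..n}) (p q h : {mpoly K[n]}).

Lemma ord_lt_size (i : 'I_n) : (i < d)%N.
Proof. exact: leq_trans (ltn_ord i) hnd. Qed.

Lemma lexlead_gpoly i : lexlead (G i) = glead A i.
Proof.
apply: is_lead_lexlead.
by have := is_lead_mulX_gpoly 0%MM (ltnW (ord_lt_size i)); rewrite mpolyX0 mul1r add0m.
Qed.

Lemma mdivides_glead i m : mdivides (glead A i) m = (d - i <= m i)%N.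
Proof.
apply/forallP/idP => [/(_ i)|h j]; first by rewrite mnm1MnE eqxx mul1n.
by rewrite mnm1MnE; case: eqVneq => [<-|]; rewrite ?mul1n.
Qed.

Lemma inB_glead m : inB d m = [forall i, ~~ mdivides (glead A i) m].
Proof.
apply: eq_forallb => i; rewrite mdivides_glead -ltnNge.
by apply/idP/idP; have := ord_lt_size i; lia.
Qed.

Lemma in_ideal_vanishing p : in_ideal G p -> I p.
Proof. by move=> hp a ha; apply: meval_in_ideal hp => i; apply: gpoly_vanishing. Qed.

Lemma lexlead_vanishing_notin_B p : I p -> p != 0 -> ~~ inB d (lexlead p).
Proof.
move=> Ip p0; apply: (lead_vanishing_notin_B hA hnd (leqnn n) _ _ (lexlead_spec p0)).
  by move=> w _ j; rewrite leqNgt ltn_ord.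
by move=> a [haA hainj]; apply: Ip; split=> [j|j j' e]; [apply: haA | apply: hainj].
Qed.

Lemma vanishing_inB_eq0 q : supp_in (inB d) q -> I q -> q = 0.
Proof.
move=> hq Iq; apply/eqP/negPn/negP => q0.
by have := lexlead_vanishing_notin_B Iq q0; rewrite hq // (lexlead_spec q0).1.
Qed.

Lemma gpoly_groebner : groebner_basis G I.
Proof.
split=> [i|p Ip p0]; first exact: gpoly_vanishing.
have := lexlead_vanishing_notin_B Ip p0; rewrite inB_glead negb_forall => /existsP [i].
by rewrite negbK -lexlead_gpoly; exists i.
Qed.

Lemma in_normal_set_inB m : in_normal_set I m <-> inB d m.
Proof.
split=> [hN|hB [p [Ip [p0 lp]]]]; last first.
  by move: hB; rewrite -lp (negbTE (lexlead_vanishing_notin_B Ip p0)).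
apply/negPn/negP; rewrite inB_glead negb_forall => /existsP [i]; rewrite negbK => hi.
have hl := is_lead_mulX_gpoly (m - glead A i) (ltnW (ord_lt_size i)).
rewrite submK in hl; last by apply/mnm_lepP/forallP.
apply: hN; exists ('X_[m - glead A i] * G i); split; last split.
- by move=> a ha; rewrite mevalM gpoly_vanishing ?mulr0.
- by apply: contraTneq hl.1 => ->; rewrite msupp0.
- exact: is_lead_lexlead.
Qed.

Lemma rA_normal_form h : h \is symmetric -> is_normal_form G h (rA A h).
Proof.
move=> hs; have [r [hr hi]] := reduce_inB hnd (h - rA A h).
suff r0 : r = 0.
  split; first by rewrite r0 subr0 in hi.
  move=> m /(rA_inB hA hnd); rewrite inB_glead => /forallP hm i.
  by rewrite lexlead_gpoly.
apply: vanishing_inB_eq0 => // a ha.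
by rewrite -(subKr (h - rA A h) r) mevalB (in_ideal_vanishing hi) // mevalB meval_rA ?subrr.
Qed.

End Proposition.

Unset Implicit Arguments.

Theorem proposition2p1 (K : fieldType) (n : nat) (A : seq K)
  (hA : uniq A) (hn1 : (1 <= n)%N) (hnd : (n <= size A)%N) :
  let d := size A in
  let I := @vanishing_ideal K n A in
  let G := @gpoly K n A in
  (* (1) *)
  (groebner_basis G I /\
   (forall m : 'X_{1..n}, in_normal_set I m <-> inB d m) /\
   (forall p : {mpoly K[n]}, exists q : {mpoly K[n]},
       (forall m, m \in msupp q -> inB d m) /\ I (p - q)) /\
   (forall q : {mpoly K[n]},
       (forall m, m \in msupp q -> inB d m) -> I q -> q = 0)) /\
  (* (2) *)
  (forall h : {mpoly K[n]}, h \is symmetric -> is_normal_form G h (rA A h)).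
Proof.
move=> d I G; split; last exact: rA_normal_form.
split; first exact: gpoly_groebner.
split; first exact: in_normal_set_inB.
split; last exact: vanishing_inB_eq0.
move=> p; have [q [hq hi]] := reduce_inB hnd p.
by exists q; split => //; apply: in_ideal_vanishing.
Qed.
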